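(* Let $Q$ be a symmetric GAP in an additive group $G$ with rank $d$, and let $\mathbf{v} = (v_1,\ldots,v_n)$ be such that $v_1,\ldots,v_n \in Q$. Let $0 < \mu \le 1$. Then $$\mathbf{P}_\mu(\mathbf{v}) \gg_d |Q_{\sqrt{\mu n}}|^{-1} \gg_d (1+\mu n)^{-d/2} |Q|^{-1}.$$
   Context: For $0 \le \mu \le 1$, let $\eta^\mu$ be the random variable equal to $0$ with probability $1-\mu$ and to each of $+1,-1$ with probability $\mu/2$; let $\eta^\mu_1,\dots,\eta^\mu_n$ be iid copies. The lazy random walk is $S^\mu(\mathbf{v}) = v_1\eta^\mu_1 + \dots + v_n \eta^\mu_n$ and the concentration probability is $\mathbf{P}_\mu(\mathbf{v}) = \max_{a\in G} \mathbf{P}(S^\mu(\mathbf{v}) = a)$. A symmetric GAP of rank $d$ with dimensions $N_1,\dots,N_d>0$ (reals) and steps $w_1,\dots,w_d \in G$ is the set $Q=\{\sum_{i=1}^d n_i w_i : n_i \in \mathbb{Z}, -N_i \le n_i \le N_i\}$ (together with these data). For $t>0$, the dilate $Q_t$ is the symmetric GAP with the same steps and dimensions $tN_1,\dots,tN_d$. $|Q|$ denotes cardinality. Notation: $X \gg_d Y$ means $Y \le C X$ for some constant $C$ depending only on $d$ (for all $n \ge C$). *)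

From Stdlib Require Rdefinitions.
From HB Require Import structures.
From mathcomp Require Import all_boot all_order all_algebra.
From mathcomp Require Import Rstruct.
Set Implicit Arguments. Unset Strict Implicit. Unset Printing Implicit Defensive.
Import Order.TTheory GRing.Theory Num.Theory.
Local Open Scope ring_scope.

Definition R := Rdefinitions.R.

(* A symmetric GAP of rank d is given by dimensions N : 'I_d -> R (all > 0)
   and steps w : 'I_d -> G. *)

Definition gap_eval (G : zmodType) (d : nat) (w : 'I_d -> G) (m : 'I_d -> int) : G :=
  \sum_(i < d) (w i *~ m i).

Definition in_GAP (G : zmodType) (d : nat) (N : 'I_d -> R) (w : 'I_d -> G) (x : G) : Prop :=
  exists m : 'I_d -> int,
    (forall i, - N i <= (m i)%:~R /\ (m i)%:~R <= N i) /\ x = gap_eval w m.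

Definition gap_bound (d : nat) (N : 'I_d -> R) : nat :=
  \max_(i < d) `|Num.floor (N i)|%N.

(* coefficient vector encoded by f : 'I_d -> 'I_(2M+1), shifted by -M *)
Definition gap_coef (d : nat) (N : 'I_d -> R) (f : {ffun 'I_d -> 'I_(2 * gap_bound N).+1})
  : 'I_d -> int := fun i => (val (f i))%:Z - (gap_bound N)%:Z.

(* the (finite) list of all elements of Q, possibly with repetitions *)
Definition gap_points (G : zmodType) (d : nat) (N : 'I_d -> R) (w : 'I_d -> G) : seq G :=
  [seq gap_eval w (@gap_coef d N f) |
     f <- enum {ffun 'I_d -> 'I_(2 * gap_bound N).+1} &
     [forall i, (- N i <= (@gap_coef d N f i)%:~R) && ((@gap_coef d N f i)%:~R <= N i)]].

Definition gap_card (G : zmodType) (d : nat) (N : 'I_d -> R) (w : 'I_d -> G) : nat :=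
  size (undup (gap_points N w)).

Definition gap_dilate (d : nat) (t : R) (N : 'I_d -> R) : 'I_d -> R := fun i => t * N i.

(* an outcome of (eta_1,...,eta_n) is e : {ffun 'I_n -> 'I_3}, where
   the value k : 'I_3 encodes eta = k - 1 in {-1,0,1} *)
Definition eta_val (k : 'I_3) : int := (val k)%:Z - 1.

Definition eta_weight (mu : R) (k : 'I_3) : R :=
  if val k == 1%N then 1 - mu else mu / 2.

Definition walk (G : zmodType) (n : nat) (v : 'I_n -> G) (e : {ffun 'I_n -> 'I_3}) : G :=
  \sum_(i < n) (v i *~ eta_val (e i)).

Definition walk_prob (G : zmodType) (n : nat) (mu : R) (v : 'I_n -> G) (a : G) : R :=
  \sum_(e : {ffun 'I_n -> 'I_3} | walk v e == a) \prod_(i < n) eta_weight mu (e i).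

(* P_mu(v) = max_a P(S^mu(v) = a); the maximum over a in G is attained on the
   (finite) set of values of the walk, so we take it over those values. *)
Definition conc_prob (G : zmodType) (n : nat) (mu : R) (v : 'I_n -> G) : R :=
  \big[Num.max/0]_(e : {ffun 'I_n -> 'I_3}) walk_prob mu v (walk v e).

From HB Require Import structures.
From mathcomp Require Import all_boot all_order all_algebra.
From mathcomp Require Import Rstruct.
From mathcomp Require Import zify ring lra.
Import Order.TTheory GRing.Theory Num.Theory.
Local Open Scope ring_scope.

(** Write [v_j = sum_i m_ji w_i] with [|m_ji| <= N_i]. The [i]-th coordinate
    [X_i = sum_j m_ji eta_j] of the walk has second moment
    [mu sum_j m_ji^2 <= mu n N_i^2], so by Chebyshev's inequality and a union bound
    over the [d] coordinates, with probability at least 1/2 every [|X_i|] is at most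
    [(d+1) sqrt(mu n) N_i]. The walk then lies in [Q_((d+1) sqrt(mu n))], and by
    pigeonhole one of its points carries probability at least
    [1 / (2 |Q_((d+1) sqrt(mu n))|)].
    Both inequalities then follow from a covering bound: if [N'_i <= M N_i], every
    coefficient [|m| <= N'_i] splits as [q (2 floor(N_i) + 1) + s] with [|q| <= M] and
    [|s| <= floor(N_i)], so [Q_N'] is covered by [(2M+1)^d] translates of [Q_N]. *)

Lemma gap_evalD {G : zmodType} {d} (w : 'I_d -> G) (a b : 'I_d -> int) :
  gap_eval w (fun i => a i + b i) = gap_eval w a + gap_eval w b.
Proof. by rewrite /gap_eval -big_split; apply: eq_bigr => i _; rewrite mulrzDr. Qed.

Lemma mem_gap_points {G : zmodType} {d} (N : 'I_d -> R) (w : 'I_d -> G) x :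
  x \in gap_points N w <-> in_GAP N w x.
Proof.
split.
  case/mapP => f; rewrite mem_filter => /andP[/forallP f_bound _] ->.
  by exists (gap_coef f); split => // i; have /andP[] := f_bound i.
case=> m [m_in ->].
have m_bound i : (`|m i| <= gap_bound N)%N.
  have [m_ge m_le] := m_in i.
  have le_floor : m i <= Num.floor (N i) by rewrite floor_ge_int.
  have ge_floor : - m i <= Num.floor (N i) by rewrite floor_ge_int intrN lerNl.
  apply: (@leq_trans `|Num.floor (N i)|%N); first lia.
  exact: (@leq_bigmax _ (fun i => `|Num.floor (N i)|%N) i).
pose f := [ffun i => inord (absz (m i + (gap_bound N)%:Z)) : 'I_(2 * gap_bound N).+1].
have coef_f i : gap_coef f i = m i.
  by rewrite /gap_coef ffunE /= inordK; have := m_bound i; lia.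
apply/mapP; exists f; last by apply: eq_bigr => i _; rewrite coef_f.
rewrite mem_filter mem_enum andbT; apply/forallP => i.
by rewrite coef_f; have [-> ->] := m_in i.
Qed.

Lemma gap_card_gt0 {G : zmodType} {d} (N : 'I_d -> R) (w : 'I_d -> G) :
  (forall i, 0 <= N i) -> (0 < gap_card N w)%N.
Proof.
move=> N_ge0; have : (0 : G) \in undup (gap_points N w).
  rewrite mem_undup; apply/mem_gap_points; exists (fun _ => 0); split.
    by move=> i; rewrite oppr_le0 N_ge0.
  by rewrite /gap_eval big1 // => i _; rewrite mulr0z.
by rewrite /gap_card; case: (undup _).
Qed.

Lemma balanced_divz {f M m : int} : 0 <= f -> 0 < M ->
    - (M * (f + 1)) < m < M * (f + 1) ->
  exists q s, [/\ - M <= q <= M, - f <= s <= f & m = q * (2 * f + 1) + s].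
Proof.
move=> f_ge0 M_gt0 /andP[m_gt m_lt].
have p_gt0 : 0 < 2 * f + 1 by lia.
set q := ((m + f) %/ (2 * f + 1))%Z; set r := ((m + f) %% (2 * f + 1))%Z.
have m_eq : m + f = q * (2 * f + 1) + r by exact: divz_eq.
have r_ge0 : 0 <= r by apply: modz_ge0; lia.
have r_lt : r < 2 * f + 1 by exact: ltz_pmod.
exists q, (r - f); split; [apply/andP; split | lia | lia].
- case: (lerP (- M) q) => // q_lt.
  have : q * (2 * f + 1) <= (- M - 1) * (2 * f + 1) by apply: ler_wpM2r; lia.
  nia.
- case: (lerP q M) => // q_gt.
  have : (M + 1) * (2 * f + 1) <= q * (2 * f + 1) by apply: ler_wpM2r; lia.
  nia.
Qed.

Lemma gap_card_le_scale {G : zmodType} {d} {N N' : 'I_d -> R} (w : 'I_d -> G) {M : nat} :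
  (0 < M)%N -> (forall i, 0 <= N i) -> (forall i, N' i <= M%:R * N i) ->
  (gap_card N' w <= (2 * M + 1) ^ d * gap_card N w)%N.
Proof.
move=> M_gt0 N_ge0 N'_le.
pose f i := Num.floor (N i).
pose p i := 2 * f i + 1.
pose X := [seq gap_eval w (fun i => ((val (b i))%:Z - M%:Z) * p i) |
            b : {ffun 'I_d -> 'I_(2 * M).+1} <- enum {ffun 'I_d -> 'I_(2 * M).+1}].
have size_X : size X = ((2 * M + 1) ^ d)%N.
  by rewrite size_map -cardE card_ffun !card_ord addn1.
rewrite /gap_card -size_X -(size_allpairs +%R).
apply: uniq_leq_size; first exact: undup_uniq.
move=> z; rewrite mem_undup => /mem_gap_points [m [m_bound ->]].
have split_m i : exists qs : int * int,
    [/\ - M%:Z <= qs.1 <= M%:Z, - f i <= qs.2 <= f i & m i = qs.1 * p i + qs.2].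
  have f_ge0 : 0 <= f i by rewrite floor_ge0.
  have MN_lt : M%:R * N i < (M%:Z * (f i + 1))%:~R.
    by rewrite intrM ltr_pM2l ?ltr0n // floorD1_gt.
  have [m_ge m_le] := m_bound i.
  have m_lt : - (M%:Z * (f i + 1)) < m i < M%:Z * (f i + 1).
    apply/andP; split; rewrite -(ltr_int R); last first.
      exact: le_lt_trans (le_trans m_le (N'_le i)) MN_lt.
    rewrite intrN ltrNl; apply: le_lt_trans MN_lt.
    by apply: le_trans (N'_le i); rewrite lerNl.
  have [|q [s qs_spec]] := balanced_divz f_ge0 _ m_lt; first by rewrite ltz_nat.
  by exists (q, s).
have [qs qs_spec] := fin_all_exists split_m.
pose b := [ffun i => inord (absz ((qs i).1 + M%:Z)) : 'I_(2 * M).+1].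
have b_val i : (val (b i))%:Z - M%:Z = (qs i).1.
  by rewrite ffunE /= inordK; have [/andP[] + + _ _] := qs_spec i; lia.
have -> : gap_eval w m = gap_eval w (fun i => ((val (b i))%:Z - M%:Z) * p i)
                         + gap_eval w (fun i => (qs i).2).
  rewrite -gap_evalD; apply: eq_bigr => i _.
  by rewrite b_val; have [_ _ <-] := qs_spec i.
apply: allpairs_f; first by apply: map_f; rewrite mem_enum.
rewrite mem_undup; apply/mem_gap_points; exists (fun i => (qs i).2); split => // i.
have [_ /andP[s_ge s_le] _] := qs_spec i.
have f_le : (f i)%:~R <= N i by exact: floor_le.
split; last by apply: le_trans f_le; rewrite ler_int.
by rewrite lerNl -intrN; apply: le_trans f_le; rewrite ler_int lerNl.
Qed.

Lemma sum_ord3 (F : 'I_3 -> R) :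
  \sum_(k < 3) F k = F (inord 0) + F (inord 1) + F (inord 2).
Proof.
rewrite !big_ord_recr big_ord0 /= add0r.
by congr (_ + _ + _); congr F; apply: val_inj; rewrite /= inordK.
Qed.

Lemma conc_prob_ge0 {G : zmodType} {n} mu (v : 'I_n -> G) : 0 <= conc_prob mu v.
Proof. exact: bigmax_ge_id. Qed.

Lemma walk_prob_le_conc {G : zmodType} {n} mu (v : 'I_n -> G) a :
  walk_prob mu v a <= conc_prob mu v.
Proof.
case: (pickP (fun e => walk v e == a)) => [e /eqP <-|walk_neq].
  exact: (le_bigmax _ (fun e => walk_prob mu v (walk v e)) e).
by rewrite /walk_prob big1 ?conc_prob_ge0 // => e; rewrite walk_neq.
Qed.

Definition outcome_weight {n} (mu : R) (e : {ffun 'I_n -> 'I_3}) : R :=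
  \prod_(i < n) eta_weight mu (e i).

Section LazyWalk.
Context {n : nat} {mu : R}.
Hypotheses (mu_ge0 : 0 <= mu) (mu_le1 : mu <= 1).
Local Notation outcome := {ffun 'I_n -> 'I_3}.

Lemma outcome_weight_ge0 (e : outcome) : 0 <= outcome_weight mu e.
Proof.
apply: prodr_ge0 => i _; rewrite /eta_weight; case: ifP => _.
  by rewrite subr_ge0.
by rewrite divr_ge0.
Qed.

Lemma sum_outcome_weight : \sum_(e : outcome) outcome_weight mu e = 1.
Proof.
rewrite -(bigA_distr_bigA (fun _ k => eta_weight mu k)) big1 // => i _.
by rewrite sum_ord3 /eta_weight /= !inordK //=; lra.
Qed.

Lemma moment_eta_mul (j l : 'I_n) :
  \sum_(e : outcome) outcome_weight mu e * (eta_val (e j))%:~R * (eta_val (e l))%:~R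
    = if j == l then mu else 0.
Proof.
pose g i k : R := eta_weight mu k * (if i == j then (eta_val k)%:~R else 1)
                                  * (if i == l then (eta_val k)%:~R else 1).
have prod_at (a : 'I_n -> R) k : \prod_i (if i == k then a i else 1) = a k.
  by rewrite -big_mkcond big_pred1_eq.
rewrite (eq_bigr (fun e : outcome => \prod_i g i (e i))); last first.
  by move=> e _; rewrite !big_split /= (prod_at (fun i => (eta_val (e i))%:~R)) prod_at.
rewrite -(bigA_distr_bigA g) (bigD1 j) //=.
have sum_j : \sum_(k < 3) g j k = if j == l then mu else 0.
  rewrite sum_ord3 /g /eta_weight /eta_val /= !inordK //= eqxx.
  by case: eqP => _; lra.
rewrite sum_j; case: eqP => [jl|_]; last by rewrite mul0r.
rewrite big1 ?mulr1 // => i /negbTE i_neq.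
by rewrite sum_ord3 /g /eta_weight /eta_val /= !inordK //= -jl i_neq; lra.
Qed.

Lemma second_moment_walk (a : 'I_n -> R) :
  \sum_(e : outcome) outcome_weight mu e * (\sum_j a j * (eta_val (e j))%:~R) ^+ 2
    = mu * \sum_j a j ^+ 2.
Proof.
have -> : \sum_(e : outcome) outcome_weight mu e * (\sum_j a j * (eta_val (e j))%:~R) ^+ 2 =
    \sum_(e : outcome) \sum_j \sum_l
      a j * a l * (outcome_weight mu e * (eta_val (e j))%:~R * (eta_val (e l))%:~R).
  apply: eq_bigr => e _; rewrite expr2 mulr_suml mulr_sumr; apply: eq_bigr => j _.
  by rewrite !mulr_sumr; apply: eq_bigr => l _; ring.
rewrite exchange_big mulr_sumr; apply: eq_bigr => j _ /=.
rewrite exchange_big (bigD1 j) //= -mulr_sumr moment_eta_mul eqxx big1 ?addr0.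
  by rewrite mulrC expr2.
by move=> l /negbTE l_neq; rewrite -mulr_sumr moment_eta_mul eq_sym l_neq mulr0.
Qed.

Lemma chebyshev_union {d} (X : 'I_d -> outcome -> R) (T : 'I_d -> R) :
    (forall i, 0 < T i) ->
  \sum_(e | ~~ [forall i, X i e ^+ 2 <= T i]) outcome_weight mu e <=
    \sum_i (\sum_(e : outcome) outcome_weight mu e * X i e ^+ 2) / T i.
Proof.
move=> T_gt0; pose Y e := \sum_i X i e ^+ 2 / T i.
have Y_ge0 e : 0 <= Y e by apply: sumr_ge0 => i _; rewrite divr_ge0 ?sqr_ge0 ?ltW.
have -> : \sum_i (\sum_(e : outcome) outcome_weight mu e * X i e ^+ 2) / T i
          = \sum_(e : outcome) outcome_weight mu e * Y e.
  under eq_bigr do rewrite mulr_suml.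
  by rewrite exchange_big; apply: eq_bigr => e _; rewrite mulr_sumr;
     apply: eq_bigr => i _; rewrite mulrA.
apply: le_trans (_ : \sum_(e | ~~ [forall i, X i e ^+ 2 <= T i])
                        outcome_weight mu e * Y e <= _); last first.
  rewrite [leRHS](bigID (fun e => ~~ [forall i, X i e ^+ 2 <= T i])) /= lerDl.
  by apply: sumr_ge0 => e _; rewrite mulr_ge0 ?outcome_weight_ge0.
apply: ler_sum => e /forallPn [i]; rewrite -ltNge => T_lt.
rewrite ler_peMr ?outcome_weight_ge0 // /Y (bigD1 i) //=.
apply: le_trans (_ : X i e ^+ 2 / T i <= _); first by rewrite ler_pdivlMr ?mul1r // ltW.
by rewrite lerDl; apply: sumr_ge0 => k _; rewrite divr_ge0 ?sqr_ge0 ?ltW.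
Qed.

Lemma sum_weight_le_size_conc {G : zmodType} (v : 'I_n -> G)
    (good : pred outcome) (U : seq G) :
  (forall e, good e -> walk v e \in U) ->
  \sum_(e | good e) outcome_weight mu e <= (size U)%:R * conc_prob mu v.
Proof.
move=> good_in_U.
apply: le_trans (_ : \sum_(e : outcome)
                       outcome_weight mu e * \sum_(a <- U) (walk v e == a)%:R <= _).
  rewrite big_mkcond; apply: ler_sum => e _; case: ifP => [/good_in_U walk_in|_].
    rewrite ler_peMr ?outcome_weight_ge0 // (big_rem _ walk_in) eqxx lerDl.
    exact: sumr_ge0.
  by rewrite mulr_ge0 ?outcome_weight_ge0 ?sumr_ge0.
under eq_bigr do rewrite mulr_sumr.
rewrite exchange_big /=; apply: le_trans (_ : \sum_(a <- U) conc_prob mu v <= _).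
  apply: ler_sum => a _.
  suff -> : \sum_(e : outcome) outcome_weight mu e * (walk v e == a)%:R = walk_prob mu v a.
    exact: walk_prob_le_conc.
  rewrite /walk_prob [RHS]big_mkcond; apply: eq_bigr => e _.
  by case: eqP; rewrite ?mulr1 ?mulr0.
by rewrite big_const_seq count_predT iter_addr_0 mulr_natl.
Qed.

Lemma half_le_weight_coords_bounded {d} (a : 'I_d -> 'I_n -> R) (B : 'I_d -> R) :
    0 < mu * n%:R -> (forall i, 0 < B i) -> (forall i j, a i j ^+ 2 <= B i ^+ 2) ->
  1 / 2 <= \sum_(e : outcome | [forall i, (\sum_j a i j * (eta_val (e j))%:~R) ^+ 2
                                           <= d.+1%:R ^+ 2 * (mu * n%:R) * B i ^+ 2])
              outcome_weight mu e.
Proof.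
move=> mun_gt0 B_gt0 a_le.
pose X i (e : outcome) := \sum_j a i j * (eta_val (e j))%:~R.
pose K : R := d.+1%:R; pose T i := K ^+ 2 * (mu * n%:R) * B i ^+ 2.
have T_gt0 i : 0 < T i by rewrite mulr_gt0 ?exprn_gt0 // mulr_gt0 ?exprn_gt0 ?ltr0n.
have moment_X i : \sum_(e : outcome) outcome_weight mu e * X i e ^+ 2 <= T i / K ^+ 2.
  have -> : T i / K ^+ 2 = mu * \sum_(j < n) B i ^+ 2.
    by rewrite sumr_const card_ord /T -mulr_natr; field; rewrite addrC natr1 pnatr_eq0.
  by rewrite second_moment_walk ler_wpM2l //; apply: ler_sum => j _; exact: a_le.
have bad_le : \sum_(e | ~~ [forall i, X i e ^+ 2 <= T i]) outcome_weight mu e <= 1 / 2.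
  apply: le_trans (chebyshev_union X T T_gt0) _.
  apply: le_trans (_ : \sum_(i < d) (K ^+ 2)^-1 <= _).
    by apply: ler_sum => i _; rewrite ler_pdivrMr // mulrC; exact: moment_X.
  rewrite sumr_const card_ord -[_ *+ d]mulr_natl ler_pdivrMr ?exprn_gt0 ?ltr0n //.
  have d_ge0 : 0 <= d%:R :> R by exact: ler0n.
  (* [d / (d+1)^2 <= 1/2] *)
  by rewrite /K -[d.+1%:R]natr1; nra.
have := sum_outcome_weight.
rewrite (bigID (fun e => [forall i, X i e ^+ 2 <= T i])) /=; lra.
Qed.

End LazyWalk.

Lemma gap_card_dilate_le {G : zmodType} {d} {N : 'I_d -> R} (w : 'I_d -> G) {t : R} :
  0 <= t -> (forall i, 0 <= N i) ->
  (gap_card (gap_dilate t N) w)%:R <= (2 * t + 3) ^+ d * (gap_card N w)%:R.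
Proof.
move=> t_ge0 N_ge0; pose M := (absz (Num.floor t)).+1.
have M_eq : M%:R = (Num.floor t)%:~R + 1 :> R.
  by rewrite -natr1 natr_absz ger0_norm ?floor_ge0.
have t_le : t <= M%:R by have := floorD1_gt t; rewrite intrD M_eq => /ltW.
have M_le : M%:R <= t + 1 by rewrite M_eq lerD2r floor_le.
have := gap_card_le_scale (M := M) w (ltn0Sn _) N_ge0 (fun i => ler_wpM2r (N_ge0 i) t_le).
rewrite -(ler_nat R) natrM natrX => /le_trans; apply; apply: ler_wpM2r => //.
by apply: lerXn2r; rewrite ?nnegrE ?ler0n ?natrD ?natrM //; lra.
Qed.

Lemma walk_gap_eval {G : zmodType} {n d} (w : 'I_d -> G) (v : 'I_n -> G)
    (m : 'I_n -> 'I_d -> int) e :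
  (forall j, v j = gap_eval w (m j)) ->
  walk v e = gap_eval w (fun i => \sum_j m j i * eta_val (e j)).
Proof.
move=> v_eq; rewrite /walk /gap_eval.
under eq_bigr do rewrite v_eq /gap_eval mulrz_suml.
rewrite exchange_big; apply: eq_bigr => i _ /=.
by rewrite mulrz_sumr; apply: eq_bigr => j _; rewrite mulrzA.
Qed.

Lemma half_le_gap_card_conc {G : zmodType} {d n} {N : 'I_d -> R} {w : 'I_d -> G}
    {v : 'I_n -> G} {mu : R} :
  (0 < n)%N -> (forall i, 0 < N i) -> (forall j, in_GAP N w (v j)) ->
  0 < mu -> mu <= 1 ->
  1 / 2 <= (gap_card (gap_dilate (d.+1%:R * Num.sqrt (mu * n%:R)) N) w)%:R
           * conc_prob mu v.
Proof.
move=> n_gt0 N_gt0 v_in mu_gt0 mu_le1; have mu_ge0 := ltW mu_gt0.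
have mun_gt0 : 0 < mu * n%:R by rewrite mulr_gt0 ?ltr0n.
have [m m_spec] := fin_all_exists v_in.
have m_sqr_le i j : (m j i)%:~R ^+ 2 <= N i ^+ 2 :> R.
  by have [? ?] := (m_spec j).1 i; nra.
apply: le_trans (half_le_weight_coords_bounded mu_ge0 mu_le1
                   (fun i j => (m j i)%:~R) N mun_gt0 N_gt0 m_sqr_le) _.
rewrite /gap_card; apply: sum_weight_le_size_conc => // e /forallP X_le.
rewrite mem_undup; apply/mem_gap_points.
exists (fun i => \sum_j m j i * eta_val (e j)); split; last first.
  by apply: walk_gap_eval => j; case: (m_spec j).
move=> i; have := X_le i.
under eq_bigr do rewrite -intrM; rewrite -rmorph_sum /gap_dilate.
rewrite -{1}(sqr_sqrtr (ltW mun_gt0)) -!exprMn.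
have KtN_ge0 : 0 <= d.+1%:R * Num.sqrt (mu * n%:R) * N i.
  by rewrite !mulr_ge0 ?sqrtr_ge0 ?ler0n ?ltW.
by move=> sq_le; split; nra.
Qed.

Lemma inv_gap_card_le_conc {G : zmodType} {d n} {N : 'I_d -> R} {w : 'I_d -> G}
    {v : 'I_n -> G} {mu : R} :
  (0 < n)%N -> (forall i, 0 < N i) -> (forall j, in_GAP N w (v j)) ->
  0 < mu -> mu <= 1 ->
  ((gap_card (gap_dilate (Num.sqrt (mu * n%:R)) N) w)%:R)^-1
    <= 2 * ((2 * d + 3) ^ d)%N%:R * conc_prob mu v.
Proof.
move=> n_gt0 N_gt0 v_in mu_gt0 mu_le1.
have := half_le_gap_card_conc n_gt0 N_gt0 v_in mu_gt0 mu_le1.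
set t := Num.sqrt _; set Qt := gap_card (gap_dilate t N) w.
have tN_ge0 i : 0 <= gap_dilate t N i by rewrite mulr_ge0 ?sqrtr_ge0 ?ltW.
have KtN_le i : gap_dilate (d.+1%:R * t) N i <= d.+1%:R * gap_dilate t N i.
  by rewrite /gap_dilate mulrA.
have := gap_card_le_scale w (ltn0Sn d) tN_ge0 KtN_le.
rewrite -(ler_nat R) natrM mulnSr -addnA => QKt_le half_le.
have Qt_gt0 : 0 < Qt%:R :> R by rewrite ltr0n gap_card_gt0.
have := conc_prob_ge0 mu v; rewrite -div1r ler_pdivrMr //; nra.
Qed.

Lemma inv_gap_card_le_dilate {G : zmodType} {d} {N : 'I_d -> R} (w : 'I_d -> G) {t s : R} :
  (forall i, 0 < N i) -> 0 <= t -> t <= s -> 1 <= s ->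
  (s ^+ d)^-1 * ((gap_card N w)%:R)^-1
    <= 5 ^+ d * ((gap_card (gap_dilate t N) w)%:R)^-1.
Proof.
move=> N_gt0 t_ge0 t_le_s s_ge1; have N_ge0 i := ltW (N_gt0 i).
have Q_gt0 : 0 < (gap_card N w)%:R :> R by rewrite ltr0n gap_card_gt0.
have Qt_gt0 : 0 < (gap_card (gap_dilate t N) w)%:R :> R.
  by rewrite ltr0n gap_card_gt0 // => i; rewrite mulr_ge0.
rewrite -invfM ler_pdivlMr // mulrC ler_pdivrMr ?mulr_gt0 ?exprn_gt0 //; last lra.
apply: le_trans (gap_card_dilate_le w t_ge0 N_ge0) _.
rewrite mulrA -exprMn ler_wpM2r ?ler0n //.
by apply: lerXn2r; rewrite ?nnegrE; lra.
Qed.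

Theorem proposition1p3 :
  forall d : nat, exists C : R, 0 < C /\
    forall n : nat, C <= n%:R ->
    forall (G : zmodType) (N : 'I_d -> R) (w : 'I_d -> G) (v : 'I_n -> G) (mu : R),
      (forall i, 0 < N i) ->
      (forall j, in_GAP N w (v j)) ->
      0 < mu -> mu <= 1 ->
      let Qt := gap_card (gap_dilate (Num.sqrt (mu * n%:R)) N) w in
      ((Qt%:R)^-1 <= C * conc_prob mu v) /\
      ((Num.sqrt (1 + mu * n%:R) ^+ d)^-1 * ((gap_card N w)%:R)^-1 <= C * (Qt%:R)^-1).
Proof.
move=> d; pose c : R := ((2 * d + 5) ^ d)%N%:R.
have c_ge1 : 1 <= c by rewrite ler1n expn_gt0 addn_gt0 orbT.
exists (2 * c); split => [|n C_le G N w v mu N_gt0 v_in mu_gt0 mu_le1 Qt].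
  by rewrite mulr_gt0 // (lt_le_trans ltr01).
have n_gt0 : (0 < n)%N by rewrite -(ltr0n R); lra.
have mun_ge0 : 0 <= mu * n%:R by rewrite mulr_ge0 ?ler0n ?ltW.
have base_le (b : nat) : (b <= 2 * d + 5)%N -> (b ^ d)%N%:R <= c.
  by move=> b_le; rewrite /c !natrX lerXn2r ?nnegrE ?ler0n // ler_nat.
split.
- apply: le_trans (inv_gap_card_le_conc n_gt0 N_gt0 v_in mu_gt0 mu_le1) _.
  have := base_le (2 * d + 3)%N; rewrite leq_add2l => /(_ isT).
  by have := conc_prob_ge0 mu v; nra.
- apply: le_trans (inv_gap_card_le_dilate w N_gt0 (sqrtr_ge0 (mu * n%:R)) _ _) _.
  + by rewrite ler_wsqrtr // lerDr.
  + by rewrite -{1}sqrtr1 ler_wsqrtr // lerDl.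
  rewrite ler_wpM2r ?invr_ge0 ?ler0n //.
  by have := base_le 5 (leq_addl _ _); rewrite natrX; lra.
Qed.
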